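(* Consider the problem and algorithm AC2CD described in the context. At every inner iteration $(k,i)$, with $p=p^k_i$ and $j=j(k)$: (a) if $\Delta^{k,i} \le \frac{2(1-\gamma)}{L_{p,j}}$, then $\alpha^{k,i} = \Delta^{k,i}$; (b) if $\Delta^{k,i} > \frac{2(1-\gamma)}{L_{p,j}}$, then $\alpha^{k,i} \in \bigl(\frac{2\delta(1-\gamma)}{L_{p,j}}, \Delta^{k,i}\bigr]$. Consequently $\alpha^{k,i} \ge \min\bigl\{\Delta^{k,i}, \frac{2\delta(1-\gamma)}{L_{p,j}}\bigr\}$.
   Context: Problem: minimize $f(x)$ subject to $e^T x = b$ and $l_i \le x_i \le u_i$ ($i=1,\dots,n$), where $n\ge 2$, $e\in\mathbb{R}^n$ is the all-ones vector, $b\in\mathbb{R}$, $l_i\in\mathbb{R}\cup\{-\infty\}$, $u_i\in\mathbb{R}\cup\{+\infty\}$, $l_i<u_i$, and $f:\mathbb{R}^n\to\mathbb{R}$ is continuously differentiable with $\nabla f$ Lipschitz continuous on $\mathbb{R}^n$ with constant $L$. $\mathcal F$ is the feasible set and $e_i$ the $i$th unit vector. For $i\ne j$, $L_{i,j}>0$ are fixed constants such that for every $x\in\mathbb{R}^n$ and $s,t\in\mathbb{R}$, $|\nabla f(x+s(e_i-e_j))^T(e_i-e_j)-\nabla f(x+t(e_i-e_j))^T(e_i-e_j)|\le L_{i,j}|s-t|$; $L_{i,i}=0$ (and $c/0$ is read as $+\infty$ for $c>0$). For $x\in\mathcal F$, $D_h(x)=\min\{x_h-l_h,u_h-x_h\}$.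 Algorithm AC2CD with parameters $\tau\in(0,1]$, $\gamma,\delta\in(0,1)$, $0<A_l\le A_u<\infty$ and starting point $x^0\in\mathcal F$: for $k=0,1,2,\dots$ (outer iterations): let $D^k=\max_h D_h(x^k)$; choose an index $j(k)$ with $D_{j(k)}(x^k)\ge\tau D^k$; choose a permutation $(p^k_1,\dots,p^k_n)$ of $\{1,\dots,n\}$; set $z^{k,1}=x^k$; for $i=1,\dots,n$ (inner iteration $(k,i)$): set $g^{k,i}=\nabla_{j(k)}f(z^{k,i})-\nabla_{p^k_i}f(z^{k,i})$ and $d^{k,i}=g^{k,i}(e_{p^k_i}-e_{j(k)})$; let $\bar\alpha^{k,i}=\min\{u_{p^k_i}-z^{k,i}_{p^k_i},\,z^{k,i}_{j(k)}-l_{j(k)}\}/g^{k,i}$ if $g^{k,i}>0$, $\bar\alpha^{k,i}=\min\{z^{k,i}_{p^k_i}-l_{p^k_i},\,u_{j(k)}-z^{k,i}_{j(k)}\}/|g^{k,i}|$ if $g^{k,i}<0$, and $\bar\alpha^{k,i}=0$ if $g^{k,i}=0$; choose $A^{k,i}\in[A_l,A_u]$ and set $\Delta^{k,i}=\min\{\bar\alpha^{k,i},A^{k,i}\}$; Armijo line search: start with $\alpha=\Delta^{k,i}$ and, while $f(z^{k,i}+\alpha d^{k,i})>f(z^{k,i})+\gamma\alpha\nabla f(z^{k,i})^Td^{k,i}$, replace $\alpha$ by $\delta\alpha$; let $\alpha^{k,i}$ be the final $\alpha$ and $z^{k,i+1}=z^{k,i}+\alpha^{k,i}d^{k,i}$.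 Finally $x^{k+1}=z^{k,n+1}$. Standing assumptions: the level set $\mathcal L_0=\{x\in\mathcal F: f(x)\le f(x^0)\}$ is nonempty and compact, and every $x\in\mathcal L_0$ has at least one index $i$ with $l_i<x_i<u_i$. *)

From Stdlib Require Import Reals.
From Coquelicot Require Import Coquelicot.
Open Scope R_scope.

(* Vectors of R^n are represented as functions nat -> R; only the
   coordinates 0..n-1 are meaningful (indices are 0-based). *)
Definition vec := nat -> R.

Fixpoint vsum (m : nat) (F : nat -> R) : R :=
  match m with O => 0 | S k => vsum k F + F k end.

Definition dot (n : nat) (x y : vec) : R := vsum n (fun i => x i * y i).
Definition vnorm (n : nat) (x : vec) : R := sqrt (dot n x x).
Definition vadd (x y : vec) : vec := fun i => x i + y i.
Definition vsub (x y : vec) : vec := fun i => x i - y i.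
Definition vscale (a : R) (x : vec) : vec := fun i => a * x i.
Definition unitv (i : nat) : vec := fun h => if Nat.eqb h i then 1 else 0.

Definition on_Rn (n : nat) (f : vec -> R) : Prop :=
  forall x y : vec, (forall i, (i < n)%nat -> x i = y i) -> f x = f y.

Definition is_gradient (n : nat) (f : vec -> R) (grad : vec -> vec) : Prop :=
  forall x : vec, forall eps : R, 0 < eps -> exists del : R, 0 < del /\
    forall h : vec, vnorm n h < del ->
      Rabs (f (vadd x h) - f x - dot n (grad x) h) <= eps * vnorm n h.

Definition lipschitz_grad (n : nat) (grad : vec -> vec) (L : R) : Prop :=
  forall x y : vec, vnorm n (vsub (grad x) (grad y)) <= L * vnorm n (vsub x y).

Definition feasible (n : nat) (b : R) (l u : nat -> Rbar) (x : vec) : Prop :=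
  vsum n x = b /\
  forall i, (i < n)%nat -> Rbar_le (l i) (Finite (x i)) /\ Rbar_le (Finite (x i)) (u i).

Definition compact_Rn (n : nat) (K : vec -> Prop) : Prop :=
  forall s : nat -> vec, (forall m, K (s m)) ->
    exists phi : nat -> nat, (forall m, (phi m < phi (S m))%nat) /\
    exists y : vec, K y /\ forall i, (i < n)%nat -> Un_cv (fun m => s (phi m) i) (y i).

Definition Dh (l u : nat -> Rbar) (x : vec) (h : nat) : Rbar :=
  Rbar_min (Rbar_minus (Finite (x h)) (l h)) (Rbar_minus (u h) (Finite (x h))).

Definition rbar_max (a b : Rbar) : Rbar := if Rbar_le_dec a b then b else a.

Fixpoint rbmax (m : nat) (F : nat -> Rbar) : Rbar :=
  match m with O => m_infty | S k => rbar_max (rbmax k F) (F k) end.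

(* c / d with the convention c / 0 = +oo *)
Definition rdiv_inf (c d : R) : Rbar :=
  if Req_EM_T d 0 then p_infty else Finite (c / d).

(* the maximal stepsize bar alpha along d = g (e_p - e_j) *)
Definition alpha_bar (l u : nat -> Rbar) (z : vec) (p j : nat) (g : R) : Rbar :=
  if Rlt_dec 0 g then
    Rbar_mult (Rbar_min (Rbar_minus (u p) (Finite (z p)))
                        (Rbar_minus (Finite (z j)) (l j))) (Finite (/ g))
  else if Rlt_dec g 0 then
    Rbar_mult (Rbar_min (Rbar_minus (Finite (z p)) (l p))
                        (Rbar_minus (u j) (Finite (z j)))) (Finite (/ Rabs g))
  else Finite 0.

(* Armijo condition fails (the while-loop test is true) at stepsize a *)
Definition armijo_test (f : vec -> R) (n : nat) (grad : vec -> vec)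
    (gamma : R) (z d : vec) (a : R) : Prop :=
  f (vadd z (vscale a d)) > f z + gamma * a * dot n (grad z) d.

Definition armijo_output (f : vec -> R) (n : nat) (grad : vec -> vec)
    (gamma delta : R) (z d : vec) (Delta alpha : R) : Prop :=
  exists m : nat, alpha = delta ^ m * Delta /\
    ~ armijo_test f n grad gamma z d (delta ^ m * Delta) /\
    forall m', (m' < m)%nat -> armijo_test f n grad gamma z d (delta ^ m' * Delta).

From Stdlib Require Import Reals Lra Lia Psatz FunctionalExtensionality.
From Coquelicot Require Import Coquelicot.
Open Scope R_scope.

(* Along e_p - e_j the slope of f is L_pj-Lipschitz, so with g = grad_j f(z) - grad_p f(z)
   the descent lemma gives f(z + a g (e_p - e_j)) <= f(z) - a g^2 (1 - L_pj a / 2), while the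
   Armijo test asks for f(z) - gamma a g^2: every step a in [0, 2(1-gamma)/L_pj] is accepted.
   Backtracking from Delta therefore returns Delta itself when Delta lies in that interval, and
   otherwise returns the first trial step inside it, whose rejected predecessor was larger than
   2(1-gamma)/L_pj.  This needs Delta >= 0, i.e. that the current point satisfies the bounds;
   all iterates do, since every accepted step is at most alpha_bar.  When p = j the direction
   vanishes and Delta is accepted at once. *)

Lemma vsum_ext m F G : (forall i, (i < m)%nat -> F i = G i) -> vsum m F = vsum m G.
Proof.
  induction m as [|m IH]; intros H; simpl; [reflexivity|].
  rewrite IH by (intros; apply H; lia).
  rewrite H by lia; reflexivity.
Qed.

Lemma vsum_scal m a F : vsum m (fun i => a * F i) = a * vsum m F.
Proof. induction m as [|m IH]; simpl; [ring|]. rewrite IH; ring. Qed.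

Lemma vsum_sub m F G : vsum m (fun i => F i - G i) = vsum m F - vsum m G.
Proof. induction m as [|m IH]; simpl; [ring|]. rewrite IH; ring. Qed.

Lemma dot_unitv_r n w p : (p < n)%nat -> dot n w (unitv p) = w p.
Proof.
  unfold dot, unitv; induction n as [|n IH]; intros Hp; simpl; [lia|].
  destruct (Nat.eqb_spec n p) as [->|Hnp].
  - rewrite (vsum_ext _ _ (fun i => 0 * w i)), vsum_scal by
      (intros i Hi; destruct (Nat.eqb_spec i p); [lia|ring]).
    ring.
  - rewrite IH by lia; ring.
Qed.

Lemma dot_sub_r n w x y : dot n w (vsub x y) = dot n w x - dot n w y.
Proof. unfold dot, vsub; rewrite <- vsum_sub; apply vsum_ext; intros; ring. Qed.

Lemma dot_scale_r n w a x : dot n w (vscale a x) = a * dot n w x.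
Proof. unfold dot, vscale; rewrite <- vsum_scal; apply vsum_ext; intros; ring. Qed.

Lemma dot_unitv_sub_r n w p j : (p < n)%nat -> (j < n)%nat ->
  dot n w (vsub (unitv p) (unitv j)) = w p - w j.
Proof. intros; rewrite dot_sub_r, !dot_unitv_r; auto. Qed.

Lemma vnorm_scale n a x : vnorm n (vscale a x) = Rabs a * vnorm n x.
Proof.
  unfold vnorm.
  replace (dot n (vscale a x) (vscale a x)) with (a * a * dot n x x).
  - rewrite sqrt_mult_alt by nra. fold (Rsqr a). rewrite sqrt_Rsqr_abs. reflexivity.
  - unfold dot, vscale; rewrite <- vsum_scal; apply vsum_ext; intros; ring.
Qed.

Lemma vscale_vscale a b x : vscale a (vscale b x) = vscale (a * b) x.
Proof. apply functional_extensionality; intros i; unfold vscale; ring. Qed.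

Lemma vadd_vscale0 y x : vadd y (vscale 0 x) = y.
Proof. apply functional_extensionality; intros i; unfold vadd, vscale; ring. Qed.

Lemma descent_lemma (psi dpsi : R -> R) M t :
  (forall s, is_derive psi s (dpsi s)) ->
  (forall s s', Rabs (dpsi s - dpsi s') <= M * Rabs (s - s')) ->
  psi t <= psi 0 + t * dpsi 0 + M / 2 * t ^ 2.
Proof.
  intros Hd HL.
  (* [psi] minus its quadratic model at [0]; the mean value theorem shows [h t <= h 0]. *)
  set (h := fun s => psi s - (s * dpsi 0 + M / 2 * s ^ 2)).
  assert (Hh : forall s, is_derive h s (dpsi s - (dpsi 0 + M * s))).
  { intros s; apply (is_derive_minus _ _ _ _ _ (Hd s)).
    auto_derive; [exact I | field]. }
  destruct (MVT_gen h 0 t (fun s => dpsi s - (dpsi 0 + M * s))) as (c & Hc & Hmvt).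
  - intros s _; apply Hh.
  - intros s _; apply continuity_pt_filterlim, (ex_derive_continuous h).
    eexists; apply Hh.
  - assert (Hct : c * t = Rabs c * Rabs t).
    { rewrite <- Rabs_mult, Rabs_right; [reflexivity|].
      revert Hc; unfold Rmin, Rmax; destruct (Rle_dec 0 t); intros; nra. }
    assert (Hslope : (dpsi c - dpsi 0) * t <= M * (c * t)).
    { rewrite Hct, <- Rmult_assoc.
      apply (Rle_trans _ (Rabs (dpsi c - dpsi 0) * Rabs t)).
      - rewrite <- Rabs_mult; apply Rle_abs.
      - apply Rmult_le_compat_r; [apply Rabs_pos|].
        specialize (HL c 0); rewrite Rminus_0_r in HL; exact HL. }
    unfold h in Hmvt; nra.
Qed.

Definition slope_lipschitz (n : nat) (grad : vec -> vec) (y v : vec) (M : R) : Prop :=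
  forall s t, Rabs (dot n (grad (vadd y (vscale s v))) v - dot n (grad (vadd y (vscale t v))) v)
              <= M * Rabs (s - t).

Section Line_search.

Variables (n : nat) (f : vec -> R) (grad : vec -> vec).
Hypothesis f_grad : is_gradient n f grad.

Lemma is_derive_along y v s :
  is_derive (fun s => f (vadd y (vscale s v))) s (dot n (grad (vadd y (vscale s v))) v).
Proof.
  apply is_derive_Reals; intros eps Heps.
  set (N := vnorm n v).
  assert (HN : 0 <= N) by apply sqrt_pos.
  set (eps' := eps / (2 * (N + 1))).
  assert (Heps' : 0 < eps') by (apply Rdiv_lt_0_compat; lra).
  assert (Heps'N : eps' * (N + 1) = eps / 2) by (unfold eps'; field; lra).
  destruct (f_grad (vadd y (vscale s v)) eps' Heps') as (del & Hdel & Hx).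
  assert (Hdel' : 0 < del / (N + 1)) by (apply Rdiv_lt_0_compat; lra).
  exists (mkposreal _ Hdel'); simpl; intros h Hh0 Hh.
  assert (Habs : 0 < Rabs h) by (apply Rabs_pos_lt; exact Hh0).
  specialize (Hx (vscale h v)).
  rewrite vnorm_scale, dot_scale_r in Hx; fold N in Hx.
  replace (vadd (vadd y (vscale s v)) (vscale h v)) with (vadd y (vscale (s + h) v)) in Hx
    by (apply functional_extensionality; intros i; unfold vadd, vscale; ring).
  assert (Hsmall : Rabs h * N < del).
  { apply (Rmult_lt_compat_r (N + 1)) in Hh; [|lra].
    unfold Rdiv in Hh; rewrite Rmult_assoc, Rinv_l in Hh; nra. }
  specialize (Hx Hsmall).
  set (D := dot n (grad (vadd y (vscale s v))) v) in *.
  set (df := f (vadd y (vscale (s + h) v)) - f (vadd y (vscale s v))) in *.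
  replace (df / h - D) with ((df - h * D) / h) by (field; exact Hh0).
  rewrite Rabs_div by exact Hh0.
  apply Rlt_div_l; [exact Habs|].
  nra.
Qed.

Lemma descent_along y v M t :
  slope_lipschitz n grad y v M ->
  f (vadd y (vscale t v)) <= f y + t * dot n (grad y) v + M / 2 * t ^ 2.
Proof.
  intros HL.
  rewrite <- (vadd_vscale0 y v) at 2 3.
  apply (descent_lemma (fun s => f (vadd y (vscale s v)))
                       (fun s => dot n (grad (vadd y (vscale s v))) v));
    [apply is_derive_along | exact HL].
Qed.

Lemma armijo_test_fails_short_step gamma z v M a :
  slope_lipschitz n grad z v M ->
  0 < M -> 0 <= a <= 2 * (1 - gamma) / M ->
  ~ armijo_test f n grad gamma z (vscale (- dot n (grad z) v) v) a.
Proof.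
  intros HL HM Ha; unfold armijo_test.
  set (g := dot n (grad z) v).
  rewrite vscale_vscale, dot_scale_r; fold g.
  assert (Hdesc := descent_along z v M (a * - g) HL); fold g in Hdesc.
  assert (HMa : M * a <= 2 * (1 - gamma)).
  { destruct Ha as [_ Ha]; apply (Rmult_le_compat_l M) in Ha; [|lra].
    replace (M * (2 * (1 - gamma) / M)) with (2 * (1 - gamma)) in Ha by (field; lra).
    exact Ha. }
  (* Armijo bound minus descent bound *)
  assert (0 <= a * (g * g) * ((1 - gamma) - M * a / 2)).
  { apply Rmult_le_pos; [apply Rmult_le_pos|]; nra. }
  nra.
Qed.

End Line_search.

Lemma armijo_test_fails_null_direction f n grad gamma z d a :
  (forall h, d h = 0) -> ~ armijo_test f n grad gamma z d a.
Proof.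
  intros Hd; unfold armijo_test.
  replace (vadd z (vscale a d)) with z
    by (apply functional_extensionality; intros h; unfold vadd, vscale; rewrite Hd; ring).
  replace (dot n (grad z) d) with 0
    by (unfold dot; rewrite (vsum_ext _ _ (fun i => 0 * grad z i)), vsum_scal;
        [ring | intros i _; rewrite Hd; ring]).
  lra.
Qed.

Section Backtracking.

Variables (f : vec -> R) (n : nat) (grad : vec -> vec) (gamma delta : R) (z d : vec).
Hypothesis delta_range : 0 < delta < 1.

Lemma armijo_output_first Delta alpha :
  ~ armijo_test f n grad gamma z d Delta ->
  armijo_output f n grad gamma delta z d Delta alpha -> alpha = Delta.
Proof.
  intros Hacc (m & -> & _ & Hrej).
  destruct m as [|m]; [simpl; ring|].
  exfalso; apply Hacc.
  specialize (Hrej 0%nat ltac:(lia)); simpl in Hrej; rewrite Rmult_1_l in Hrej; exact Hrej.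
Qed.

Lemma armijo_output_bounds c Delta alpha :
  0 <= Delta -> (forall a, 0 <= a <= c -> ~ armijo_test f n grad gamma z d a) ->
  armijo_output f n grad gamma delta z d Delta alpha ->
  (Delta <= c -> alpha = Delta) /\
  (c < Delta -> delta * c < alpha <= Delta) /\
  Rmin Delta (delta * c) <= alpha.
Proof.
  intros HD Hacc Hout.
  assert (Hfirst : Delta <= c -> alpha = Delta)
    by (intros Hc; apply (armijo_output_first _ _ (Hacc _ (conj HD Hc)) Hout)).
  assert (Hlate : c < Delta -> delta * c < alpha <= Delta).
  { intros Hc; destruct Hout as (m & -> & _ & Hrej).
    destruct m as [|m]; [simpl; nra|].
    assert (Hprev : c < delta ^ m * Delta).
    { apply Rnot_le_lt; intros Hle; apply (Hacc (delta ^ m * Delta)); [|apply Hrej; lia].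
      split; [apply Rmult_le_pos; [apply pow_le|]|]; lra. }
    assert (Hpow : delta ^ S m < 1) by (apply pow_lt_1_compat; [lra | lia]).
    simpl in *; nra. }
  split; [exact Hfirst | split; [exact Hlate|]].
  destruct (Rle_lt_dec Delta c) as [Hc|Hc].
  - rewrite (Hfirst Hc); apply Rmin_l.
  - destruct (Hlate Hc); apply (Rle_trans _ (delta * c)); [apply Rmin_r | lra].
Qed.

Lemma armijo_output_range Delta alpha :
  0 <= Delta -> armijo_output f n grad gamma delta z d Delta alpha -> 0 <= alpha <= Delta.
Proof.
  intros HD (m & -> & _ & _).
  assert (delta ^ m <= 1) by (rewrite <- (pow1 m); apply pow_incr; lra).
  assert (0 <= delta ^ m) by (apply pow_le; lra).
  nra.
Qed.

End Backtracking.

Lemma Rbar_le_minus_r s x hi :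
  Rbar_le (Finite s) (Rbar_minus hi (Finite x)) <-> Rbar_le (Finite (x + s)) hi.
Proof. destruct hi; simpl; split; intros; auto; lra. Qed.

Lemma Rbar_le_minus_l s x lo :
  Rbar_le (Finite s) (Rbar_minus (Finite x) lo) <-> Rbar_le lo (Finite (x - s)).
Proof. destruct lo; simpl; split; intros; auto; lra. Qed.

Lemma Rbar_le_min_iff a X Y : Rbar_le a (Rbar_min X Y) <-> Rbar_le a X /\ Rbar_le a Y.
Proof.
  split.
  - intros H; split; eapply Rbar_le_trans; [exact H | apply Rbar_min_l | exact H | apply Rbar_min_r].
  - intros [HX HY]; apply Rbar_min_case; assumption.
Qed.

Lemma Rbar_le_mult_inv_iff a X c : 0 < c ->
  Rbar_le (Finite a) (Rbar_mult X (Finite (/ c))) <-> Rbar_le (Finite (a * c)) X.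
Proof.
  intros Hc; assert (Hic : 0 < / c) by (apply Rinv_0_lt_compat; exact Hc).
  destruct X as [r| |]; unfold Rbar_mult, Rbar_mult';
    [| destruct (Rle_dec 0 (/ c)) as [H|]; [destruct (Rle_lt_or_eq_dec 0 (/ c) H)|];
       simpl; tauto || lra ..].
  simpl; split; intros H.
  - apply (Rmult_le_compat_r c) in H; [|lra].
    rewrite Rmult_assoc, Rinv_l in H; lra.
  - apply (Rmult_le_compat_r (/ c)) in H; [|lra].
    rewrite Rmult_assoc, Rinv_r in H; lra.
Qed.

Definition between (lo hi : Rbar) (x : R) : Prop :=
  Rbar_le lo (Finite x) /\ Rbar_le (Finite x) hi.

Definition in_box (n : nat) (l u : nat -> Rbar) (y : vec) : Prop :=
  forall h, (h < n)%nat -> between (l h) (u h) (y h).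

Lemma between_add lo hi x s :
  between lo hi x -> 0 <= s -> Rbar_le (Finite s) (Rbar_minus hi (Finite x)) ->
  between lo hi (x + s).
Proof.
  intros [Hlo _] Hs Hhi; split.
  - apply (Rbar_le_trans _ (Finite x)); [exact Hlo | simpl; lra].
  - apply Rbar_le_minus_r; exact Hhi.
Qed.

Lemma between_sub lo hi x s :
  between lo hi x -> 0 <= s -> Rbar_le (Finite s) (Rbar_minus (Finite x) lo) ->
  between lo hi (x - s).
Proof.
  intros [_ Hhi] Hs Hlo; split.
  - apply Rbar_le_minus_l; exact Hlo.
  - apply (Rbar_le_trans _ (Finite x)); [simpl; lra | exact Hhi].
Qed.

Section Feasible_steps.

Variables (n : nat) (l u : nat -> Rbar) (z : vec) (p j : nat).
Hypotheses (z_in_box : in_box n l u z) (p_lt_n : (p < n)%nat) (j_lt_n : (j < n)%nat).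

Lemma alpha_bar_nonneg g : Rbar_le (Finite 0) (alpha_bar l u z p j g).
Proof.
  destruct (z_in_box p p_lt_n) as [Hlp Hup], (z_in_box j j_lt_n) as [Hlj Huj].
  assert (Hup_p : Rbar_le (Finite 0) (Rbar_minus (u p) (Finite (z p))))
    by (apply Rbar_le_minus_r; rewrite Rplus_0_r; exact Hup).
  assert (Hup_j : Rbar_le (Finite 0) (Rbar_minus (u j) (Finite (z j))))
    by (apply Rbar_le_minus_r; rewrite Rplus_0_r; exact Huj).
  assert (Hlo_p : Rbar_le (Finite 0) (Rbar_minus (Finite (z p)) (l p)))
    by (apply Rbar_le_minus_l; rewrite Rminus_0_r; exact Hlp).
  assert (Hlo_j : Rbar_le (Finite 0) (Rbar_minus (Finite (z j)) (l j)))
    by (apply Rbar_le_minus_l; rewrite Rminus_0_r; exact Hlj).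
  unfold alpha_bar; destruct (Rlt_dec 0 g) as [Hg|]; [|destruct (Rlt_dec g 0) as [Hg|]].
  - apply (Rbar_le_mult_inv_iff _ _ _ Hg); rewrite Rmult_0_l.
    apply Rbar_le_min_iff; split; assumption.
  - apply (Rbar_le_mult_inv_iff _ _ _ (Rabs_pos_lt g ltac:(lra))); rewrite Rmult_0_l.
    apply Rbar_le_min_iff; split; assumption.
  - simpl; lra.
Qed.

Lemma le_alpha_bar_between g a :
  0 <= a -> Rbar_le (Finite a) (alpha_bar l u z p j g) ->
  between (l p) (u p) (z p + a * g) /\ between (l j) (u j) (z j - a * g).
Proof.
  intros Ha Hab; unfold alpha_bar in Hab.
  destruct (Rlt_dec 0 g) as [Hg|]; [|destruct (Rlt_dec g 0) as [Hg|]].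
  - apply (Rbar_le_mult_inv_iff _ _ _ Hg), Rbar_le_min_iff in Hab as [Hp Hj].
    split; [apply between_add | apply between_sub]; auto; nra.
  - apply (Rbar_le_mult_inv_iff _ _ _ (Rabs_pos_lt g ltac:(lra))), Rbar_le_min_iff in Hab
      as [Hp Hj].
    rewrite Rabs_left in Hp, Hj by exact Hg.
    replace (z p + a * g) with (z p - a * - g) by ring.
    replace (z j - a * g) with (z j + a * - g) by ring.
    split; [apply between_sub | apply between_add]; auto; nra.
  - replace g with 0 by lra; rewrite Rmult_0_r, Rplus_0_r, Rminus_0_r; auto.
Qed.

Lemma in_box_step s :
  between (l p) (u p) (z p + s) -> between (l j) (u j) (z j - s) ->
  in_box n l u (vadd z (vscale s (vsub (unitv p) (unitv j)))).
Proof.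
  intros Hp Hj h Hh; unfold vadd, vscale, vsub, unitv.
  destruct (Nat.eqb_spec h p) as [Hhp|], (Nat.eqb_spec h j) as [Hhj|]; try subst h.
  - rewrite Rminus_diag, Rmult_0_r, Rplus_0_r; auto.
  - rewrite Rminus_0_r, Rmult_1_r; exact Hp.
  - replace (z j + s * (0 - 1)) with (z j - s) by ring; exact Hj.
  - rewrite Rminus_diag, Rmult_0_r, Rplus_0_r; auto.
Qed.

Lemma ac2cd_step_in_box f grad gamma delta g A Delta alpha :
  0 < delta < 1 -> 0 < A ->
  Rbar_min (alpha_bar l u z p j g) (Finite A) = Finite Delta ->
  armijo_output f n grad gamma delta z (vscale g (vsub (unitv p) (unitv j))) Delta alpha ->
  0 <= Delta /\ in_box n l u (vadd z (vscale alpha (vscale g (vsub (unitv p) (unitv j))))).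
Proof.
  intros Hdelta HA HDelta Hout.
  assert (HD0 : 0 <= Delta).
  { change (Rbar_le (Finite 0) (Finite Delta)); rewrite <- HDelta.
    apply Rbar_le_min_iff; split; [apply alpha_bar_nonneg | simpl; lra]. }
  assert (HDab : Rbar_le (Finite Delta) (alpha_bar l u z p j g))
    by (rewrite <- HDelta; apply Rbar_min_l).
  destruct (armijo_output_range _ _ _ _ _ _ _ Hdelta _ _ HD0 Hout) as [Ha0 HaD].
  split; [exact HD0|].
  assert (Hab : Rbar_le (Finite alpha) (alpha_bar l u z p j g))
    by (apply (Rbar_le_trans _ (Finite Delta)); [simpl; exact HaD | exact HDab]).
  destruct (le_alpha_bar_between g alpha Ha0 Hab) as [Hp Hj].
  rewrite vscale_vscale; apply in_box_step; assumption.
Qed.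

End Feasible_steps.

Lemma nested_loop_invariant (P : vec -> Prop) n (x : nat -> vec) (z : nat -> nat -> vec) :
  P (x 0%nat) -> (forall k, z k 0%nat = x k) -> (forall k, x (S k) = z k n) ->
  (forall k i, (i < n)%nat -> P (z k i) -> P (z k (S i))) ->
  forall k i, (i <= n)%nat -> P (z k i).
Proof.
  intros Hx0 Hz0 Hxs Hstep.
  assert (Hinner : forall k, P (x k) -> forall i, (i <= n)%nat -> P (z k i)).
  { intros k Hk i; induction i as [|i IH]; intros Hi.
    - rewrite Hz0; exact Hk.
    - apply Hstep; [lia | apply IH; lia]. }
  assert (Houter : forall k, P (x k)).
  { induction k as [|k IH]; [exact Hx0|].
    rewrite Hxs; apply Hinner; [exact IH | lia]. }
  intros k; apply Hinner, Houter.
Qed.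

Lemma rdiv_inf_pos c d : 0 < d -> rdiv_inf c d = Finite (c / d).
Proof. intros Hd; unfold rdiv_inf; destruct (Req_EM_T d 0); [lra | reflexivity]. Qed.

Lemma ac2cd_stepsize_bounds n f grad gamma delta z p j Lpj Delta alpha :
  is_gradient n f grad -> (p < n)%nat -> (j < n)%nat ->
  (p <> j -> 0 < Lpj) -> (p = j -> Lpj = 0) ->
  slope_lipschitz n grad z (vsub (unitv p) (unitv j)) Lpj ->
  0 < delta < 1 -> 0 <= Delta ->
  armijo_output f n grad gamma delta z
    (vscale (grad z j - grad z p) (vsub (unitv p) (unitv j))) Delta alpha ->
  (Rbar_le (Finite Delta) (rdiv_inf (2 * (1 - gamma)) Lpj) -> alpha = Delta) /\
  (Rbar_lt (rdiv_inf (2 * (1 - gamma)) Lpj) (Finite Delta) ->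
     Rbar_lt (rdiv_inf (2 * delta * (1 - gamma)) Lpj) (Finite alpha) /\ alpha <= Delta) /\
  Rbar_le (Rbar_min (Finite Delta) (rdiv_inf (2 * delta * (1 - gamma)) Lpj)) (Finite alpha).
Proof.
  intros Hgrad Hp Hj HLpos HLdiag HLline Hdelta HD0 Hout.
  destruct (Nat.eq_dec p j) as [<-|Hpj].
  - rewrite (HLdiag eq_refl); unfold rdiv_inf.
    destruct (Req_EM_T 0 0) as [_|]; [|lra].
    assert (Ha : alpha = Delta).
    { eapply armijo_output_first; [apply armijo_test_fails_null_direction | exact Hout].
      intros h; unfold vscale, vsub; ring. }
    split; [auto | split; [simpl; tauto | rewrite Ha; apply Rbar_min_l]].
  - assert (HM : 0 < Lpj) by (apply HLpos, Hpj).
    rewrite !rdiv_inf_pos by exact HM.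
    replace (2 * delta * (1 - gamma) / Lpj) with (delta * (2 * (1 - gamma) / Lpj))
      by (field; lra).
    replace (grad z j - grad z p) with (- dot n (grad z) (vsub (unitv p) (unitv j))) in Hout
      by (rewrite dot_unitv_sub_r by assumption; ring).
    destruct (armijo_output_bounds _ _ _ _ _ _ _ Hdelta (2 * (1 - gamma) / Lpj) _ _ HD0
                (fun a Ha => armijo_test_fails_short_step _ _ _ Hgrad _ _ _ _ _ HLline HM Ha) Hout)
      as (Hshort & Hlong & Hmin).
    simpl; auto.
Qed.

Theorem lemma1
  (n : nat) (b : R) (l u : nat -> Rbar) (f : vec -> R) (grad : vec -> vec)
  (L : R) (Lij : nat -> nat -> R)
  (tau gamma delta Al Au : R)
  (x : nat -> vec) (z : nat -> nat -> vec) (jk : nat -> nat)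
  (perm : nat -> nat -> nat) (A Delta alpha : nat -> nat -> R) :
  (2 <= n)%nat ->
  (* problem data *)
  (forall i, (i < n)%nat -> l i <> p_infty /\ u i <> m_infty /\ Rbar_lt (l i) (u i)) ->
  on_Rn n f ->
  is_gradient n f grad ->
  0 <= L -> lipschitz_grad n grad L ->
  (forall i j, (i < n)%nat -> (j < n)%nat -> i <> j -> 0 < Lij i j) ->
  (forall i, (i < n)%nat -> Lij i i = 0) ->
  (forall i j, (i < n)%nat -> (j < n)%nat -> forall (y : vec) (s t : R),
     Rabs (dot n (grad (vadd y (vscale s (vsub (unitv i) (unitv j))))) (vsub (unitv i) (unitv j))
         - dot n (grad (vadd y (vscale t (vsub (unitv i) (unitv j))))) (vsub (unitv i) (unitv j)))
     <= Lij i j * Rabs (s - t)) ->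
  (* standing assumptions on the level set L0 *)
  feasible n b l u (x 0%nat) ->
  compact_Rn n (fun y => feasible n b l u y /\ f y <= f (x 0%nat)) ->
  (forall y, feasible n b l u y -> f y <= f (x 0%nat) ->
     exists i, (i < n)%nat /\ Rbar_lt (l i) (Finite (y i)) /\ Rbar_lt (Finite (y i)) (u i)) ->
  (* algorithm parameters *)
  0 < tau <= 1 -> 0 < gamma < 1 -> 0 < delta < 1 -> 0 < Al <= Au ->
  (* the iterates of AC2CD (inner index i = 0..n-1) *)
  (forall k, (jk k < n)%nat /\
     Rbar_le (Rbar_mult (Finite tau) (rbmax n (Dh l u (x k)))) (Dh l u (x k) (jk k))) ->
  (forall k, (forall i, (i < n)%nat -> (perm k i < n)%nat) /\
     (forall i i', (i < n)%nat -> (i' < n)%nat -> perm k i = perm k i' -> i = i')) ->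
  (forall k, z k 0%nat = x k) ->
  (forall k, x (S k) = z k n) ->
  (forall k i, (i < n)%nat ->
     let p := perm k i in let j := jk k in
     let g := grad (z k i) j - grad (z k i) p in
     let d := vscale g (vsub (unitv p) (unitv j)) in
     Al <= A k i <= Au /\
     Rbar_min (alpha_bar l u (z k i) p j g) (Finite (A k i)) = Finite (Delta k i) /\
     armijo_output f n grad gamma delta (z k i) d (Delta k i) (alpha k i) /\
     z k (S i) = vadd (z k i) (vscale (alpha k i) d)) ->
  (* conclusion *)
  forall k i, (i < n)%nat ->
    let p := perm k i in let j := jk k in
    (Rbar_le (Finite (Delta k i)) (rdiv_inf (2 * (1 - gamma)) (Lij p j)) ->
       alpha k i = Delta k i) /\
    (Rbar_lt (rdiv_inf (2 * (1 - gamma)) (Lij p j)) (Finite (Delta k i)) ->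
       Rbar_lt (rdiv_inf (2 * delta * (1 - gamma)) (Lij p j)) (Finite (alpha k i)) /\
       alpha k i <= Delta k i) /\
    Rbar_le (Rbar_min (Finite (Delta k i)) (rdiv_inf (2 * delta * (1 - gamma)) (Lij p j)))
            (Finite (alpha k i)).
Proof.
  intros _ _ _ Hgrad _ _ HLpos HLdiag HLline Hfeas _ _ _ _ Hdelta HAl Hjk Hperm Hz0 Hxs Hit.
  assert (Hidx : forall k i, (i < n)%nat -> (perm k i < n)%nat /\ (jk k < n)%nat)
    by (intros k i Hi; split; [apply (proj1 (Hperm k)), Hi | apply Hjk]).
  assert (Hstep : forall k i, (i < n)%nat -> in_box n l u (z k i) ->
            0 <= Delta k i /\ in_box n l u (z k (S i))).
  { intros k i Hi Hzi; destruct (Hidx k i Hi) as [Hp Hj].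
    destruct (Hit k i Hi) as (HA & HD & Hout & ->).
    eapply ac2cd_step_in_box; eauto; lra. }
  assert (Hbox : forall k i, (i <= n)%nat -> in_box n l u (z k i))
    by exact (nested_loop_invariant _ n x z (proj2 Hfeas) Hz0 Hxs
                (fun k i Hi Hzi => proj2 (Hstep k i Hi Hzi))).
  intros k i Hi; cbv zeta.
  destruct (Hidx k i Hi) as [Hp Hj].
  destruct (Hit k i Hi) as (_ & _ & Hout & _).
  assert (HD0 : 0 <= Delta k i) by (apply (Hstep k i Hi), Hbox; lia).
  assert (HLdiag' : perm k i = jk k -> Lij (perm k i) (jk k) = 0)
    by (intros ->; apply HLdiag, Hj).
  exact (ac2cd_stepsize_bounds _ _ _ _ _ _ _ _ _ _ _ Hgrad Hp Hj (HLpos _ _ Hp Hj) HLdiag'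
           (HLline _ _ Hp Hj (z k i)) Hdelta HD0 Hout).
Qed.
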